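(* Let $U=(u_1,\dots,u_n)$ be a sequence of (precise) points in $\mathbb{R}^d$ and $W=(w_1,\dots,w_m)$ a sequence of imprecise points, each modeled as a closed $d$-dimensional ball. Then $F^{\max}_1(U,W)$ can be computed in $O(dmn)$ time and $O(d(m+n))$ space.
   Context: For point sequences $A=(a_1,\dots,a_n)$, $B=(b_1,\dots,b_m)$ with Euclidean distance $d(\cdot,\cdot)$, the discrete Fréchet distance $F(A,B)$ is the minimum over all sequences of index pairs from $(1,1)$ to $(n,m)$, each step increasing the first index by one, the second by one, or both by one, of the maximum of $d(a_i,b_j)$ over pairs $(i,j)$ in the sequence. The one-sided discrete Fréchet distance with shortcuts on side $B$ is $F_c(A,B)=\min\{F(A,B')\}$ over all non-empty subsequences $B'$ of $B$ (order preserved). For region sequences $U$, $W$, $F^{\max}_1(U,W)=\max\{F_c(A,B)\}$ over all realizations $A$ of $U$ and $B$ of $W$ (a realization picks a point in each region; a precise point is a one-point region). *)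

From Stdlib Require Import Reals Lra Lia ZArith List.
Open Scope R_scope.

(* A point of R^d is a function nat -> R; only coordinates 0..d-1 matter. *)
Fixpoint sumR (d : nat) (f : nat -> R) : R :=
  match d with O => 0 | S d' => sumR d' f + f d' end.

Definition dist (d : nat) (p q : nat -> R) : R :=
  sqrt (sumR d (fun k => (p k - q k) ^ 2)).

(* A point sequence of length n is a function nat -> point, indices 0..n-1. *)

Definition coupling (n m : nat) (p : list (nat * nat)) : Prop :=
  (1 <= length p)%nat /\
  nth 0 p (0%nat, 0%nat) = (0%nat, 0%nat) /\
  nth (length p - 1) p (0%nat, 0%nat) = ((n - 1)%nat, (m - 1)%nat) /\
  forall t, (t + 1 < length p)%nat ->
    let (i, j) := nth t p (0%nat, 0%nat) in
    let (i', j') := nth (t + 1) p (0%nat, 0%nat) in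
    (i' = i + 1 /\ j' = j)%nat \/ (i' = i /\ j' = j + 1)%nat \/
    (i' = i + 1 /\ j' = j + 1)%nat.

Definition coupling_cost (d : nat) (A B : nat -> nat -> R)
  (p : list (nat * nat)) : R :=
  fold_right Rmax 0 (map (fun ij => dist d (A (fst ij)) (B (snd ij))) p).

Definition frechet (d n m : nat) (A B : nat -> nat -> R) (v : R) : Prop :=
  (exists p, coupling n m p /\ coupling_cost d A B p = v) /\
  (forall p, coupling n m p -> v <= coupling_cost d A B p).

Definition subseq_idx (k m : nat) (s : nat -> nat) : Prop :=
  (1 <= k)%nat /\ (forall t, (t < k)%nat -> (s t < m)%nat) /\
  (forall t, (t + 1 < k)%nat -> (s t < s (t + 1))%nat).

(* v = F_c(A,B): one-sided discrete Frechet distance with shortcuts on B *)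
Definition frechet_c (d n m : nat) (A B : nat -> nat -> R) (v : R) : Prop :=
  (exists k s, subseq_idx k m s /\ frechet d n k A (fun t => B (s t)) v) /\
  (forall k s v', subseq_idx k m s -> frechet d n k A (fun t => B (s t)) v' ->
     v <= v').

Definition realization (d m : nat) (C : nat -> nat -> R) (r : nat -> R)
  (B : nat -> nat -> R) : Prop :=
  forall j, (j < m)%nat -> dist d (B j) (C j) <= r j.

Definition frechet_max1 (d n m : nat) (U C : nat -> nat -> R) (r : nat -> R)
  (v : R) : Prop :=
  (exists B, realization d m C r B /\ frechet_c d n m U B v) /\
  (forall B v', realization d m C r B -> frechet_c d n m U B v' -> v' <= v).

(* Operands i j k are direct addresses; indirect addressing goes through
   integer registers.  Only integer constants; no real-to-integer conversion. *)
Inductive instr : Type :=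
| IConst (i : nat) (z : Z)
| IAdd (i j k : nat) | ISub (i j k : nat) | IMul (i j k : nat)
| ILoad (i j : nat)
| IStore (i j : nat)
| RofI (i j : nat)
| RAdd (i j k : nat) | RSub (i j k : nat) | RMul (i j k : nat)
| RDiv (i j k : nat)
| RSqrt (i j : nat)
| RLoad (i j : nat)
| RStore (i j : nat)
| JmpILt (i j t : nat)
| JmpRLt (i j t : nat)
| Jmp (t : nat)
| Halt.

Record state : Type := mkState { pc : nat; imem : nat -> Z; rmem : nat -> R }.

Definition updI (f : nat -> Z) (a : nat) (z : Z) : nat -> Z :=
  fun b => if Nat.eqb b a then z else f b.
Definition updR (f : nat -> R) (a : nat) (x : R) : nat -> R :=
  fun b => if Nat.eqb b a then x else f b.

Definition addr (z : Z) : nat := Z.to_nat z.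

Definition step (P : list instr) (s s' : state) : Prop :=
  let I := imem s in let Rm := rmem s in let q := pc s in
  match nth q P Halt with
  | IConst i z => s' = mkState (S q) (updI I i z) Rm
  | IAdd i j k => s' = mkState (S q) (updI I i (I j + I k)%Z) Rm
  | ISub i j k => s' = mkState (S q) (updI I i (I j - I k)%Z) Rm
  | IMul i j k => s' = mkState (S q) (updI I i (I j * I k)%Z) Rm
  | ILoad i j => s' = mkState (S q) (updI I i (I (addr (I j)))) Rm
  | IStore i j => s' = mkState (S q) (updI I (addr (I i)) (I j)) Rm
  | RofI i j => s' = mkState (S q) I (updR Rm i (IZR (I j)))
  | RAdd i j k => s' = mkState (S q) I (updR Rm i (Rm j + Rm k))
  | RSub i j k => s' = mkState (S q) I (updR Rm i (Rm j - Rm k))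
  | RMul i j k => s' = mkState (S q) I (updR Rm i (Rm j * Rm k))
  | RDiv i j k => s' = mkState (S q) I (updR Rm i (Rm j / Rm k))
  | RSqrt i j => s' = mkState (S q) I (updR Rm i (sqrt (Rm j)))
  | RLoad i j => s' = mkState (S q) I (updR Rm i (Rm (addr (I j))))
  | RStore i j => s' = mkState (S q) I (updR Rm (addr (I i)) (Rm j))
  | JmpILt i j t =>
      s' = mkState (if Z.ltb (I i) (I j) then t else S q) I Rm
  | JmpRLt i j t =>
      (Rm i < Rm j /\ s' = mkState t I Rm) \/
      (Rm j <= Rm i /\ s' = mkState (S q) I Rm)
  | Jmp t => s' = mkState t I Rm
  | Halt => False
  end.

Definition accessed (P : list instr) (s : state) : list nat :=
  let I := imem s in
  match nth (pc s) P Halt with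
  | IConst i _ => i :: nil
  | IAdd i j k | ISub i j k | IMul i j k => i :: j :: k :: nil
  | ILoad i j => i :: j :: addr (I j) :: nil
  | IStore i j => i :: j :: addr (I i) :: nil
  | RofI i j => i :: j :: nil
  | RAdd i j k | RSub i j k | RMul i j k | RDiv i j k => i :: j :: k :: nil
  | RSqrt i j => i :: j :: nil
  | RLoad i j => i :: j :: addr (I j) :: nil
  | RStore i j => i :: j :: addr (I i) :: nil
  | JmpILt i j _ | JmpRLt i j _ => i :: j :: nil
  | Jmp _ | Halt => nil
  end.

Definition halted (P : list instr) (s : state) : Prop := nth (pc s) P Halt = Halt.

(* exec P S t s s' : the machine goes from s to s' in exactly t steps,
   touching only memory cells with address < S (space bound S) *)
Inductive exec (P : list instr) (Sp : nat) : nat -> state -> state -> Prop :=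
| exec0 : forall s, exec P Sp 0 s s
| execS : forall t s s1 s2,
    (forall a, In a (accessed P s) -> (a < Sp)%nat) ->
    step P s s1 -> exec P Sp t s1 s2 -> exec P Sp (S t) s s2.

(* Input encoding: I[0] = n, I[1] = m, I[2] = d;
   R[i*d + k] = u_i[k] (i < n, k < d),
   R[n*d + j*d + k] = center of w_j [k],  R[n*d + m*d + j] = radius of w_j. *)
Definition init_state (d n m : nat) (U C : nat -> nat -> R) (r : nat -> R)
  : state :=
  mkState 0
    (fun a => match a with
              | 0%nat => Z.of_nat n | 1%nat => Z.of_nat m
              | 2%nat => Z.of_nat d | _ => 0%Z end)
    (fun a =>
       if Nat.ltb a (n * d) then U (a / d)%nat (a mod d)%nat
       else if Nat.ltb a (n * d + m * d) then
         C ((a - n * d) / d)%nat ((a - n * d) mod d)%nat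
       else if Nat.ltb a (n * d + m * d + m) then r (a - n * d - m * d)%nat
       else 0).

(* Over prefixes, F_c satisfies H(i, j) = min (H(i, j-1), max (d(a_i, b_j), H(i-1, j)))
   with H(-1, j) = 0: either b_j is shortcut, or it ends B' and is matched with
   a final run of A.  H is monotone in the distances and d(u_i, b_j) <=
   d(u_i, c_j) + r_j, so F^max_1 is at most the value v of the recurrence on
   E(i, j) = d(u_i, c_j) + r_j.  Conversely, let p(j) be the first row from
   p(j-1) on with E(p(j), j) >= v and place b_j at the point of w_j farthest from
   u_p(j), at distance exactly E(p(j), j).  Rows before p(j) are exactly those
   on which the recurrence stays below v, so a coupling of cost below v matched
   with b_j stays before row p(j) and never reaches row n-1: this realization
   attains v.  A real RAM evaluates the recurrence on E column by column,
   keeping a single column of n reals: O(dmn) steps and O(d(m+n)) cells. *)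

From Stdlib Require Import Reals Lra Lia ZArith List Arith.
Import ListNotations.
Open Scope R_scope.

Ltac solve_Rmax := unfold Rmax, Rmin in *; repeat destruct Rle_dec; lra.

Lemma sumR_ext d f g :
  (forall k, (k < d)%nat -> f k = g k) -> sumR d f = sumR d g.
Proof.
  induction d as [|d IH]; intros Hfg; cbn [sumR]; [reflexivity|].
  rewrite IH, (Hfg d) by (intros; try apply Hfg; lia); reflexivity.
Qed.

Lemma sumR_ge0 d f : (forall k, (k < d)%nat -> 0 <= f k) -> 0 <= sumR d f.
Proof.
  induction d as [|d IH]; intros Hf; cbn [sumR]; [lra|].
  pose proof (Hf d ltac:(lia)); pose proof (IH ltac:(intros; apply Hf; lia)); lra.
Qed.

Lemma sumR_sqr_ge0 d f : 0 <= sumR d (fun k => f k ^ 2).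
Proof. apply sumR_ge0; intros; apply pow2_ge_0. Qed.

Lemma sumR_scal d c f : sumR d (fun k => c * f k) = c * sumR d f.
Proof. induction d as [|d IH]; cbn [sumR]; [ring|]. rewrite IH; ring. Qed.

Lemma sumR_eq0 d f : (forall k, (k < d)%nat -> 0 <= f k) ->
  sumR d f = 0 -> forall k, (k < d)%nat -> f k = 0.
Proof.
  induction d as [|d IH]; cbn [sumR]; intros Hf Hs k Hk; [lia|].
  pose proof (sumR_ge0 d f ltac:(intros; apply Hf; lia)); pose proof (Hf d ltac:(lia)).
  destruct (Nat.eq_dec k d) as [->|]; [lra|].
  apply IH; [intros; apply Hf; lia | lra | lia].
Qed.

Lemma sumR_indicator0 d x : (1 <= d)%nat ->
  sumR d (fun k => (if Nat.eqb k 0 then x else 0) ^ 2) = x ^ 2.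
Proof.
  induction d as [|[|d] IH]; intros Hd; [lia|cbn; ring|].
  cbn [sumR] in *; rewrite IH by lia; cbn [Nat.eqb]; ring.
Qed.

Lemma sumR_cauchy_schwarz d a b :
  (sumR d (fun k => a k * b k)) ^ 2
  <= sumR d (fun k => a k ^ 2) * sumR d (fun k => b k ^ 2).
Proof.
  induction d as [|d IH]; cbn [sumR]; [lra|].
  set (S := sumR d (fun k => a k * b k)) in *.
  set (A := sumR d (fun k => a k ^ 2)) in *.
  set (B := sumR d (fun k => b k ^ 2)) in *.
  assert (HA : 0 <= A) by apply sumR_sqr_ge0.
  assert (HB : 0 <= B) by apply sumR_sqr_ge0.
  set (x := a d); set (y := b d).
  (* the cross term: [2 S x y <= A y^2 + B x^2] follows from [S^2 <= A B] by AM-GM *)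
  assert (Hcross : 2 * S * x * y <= A * y ^ 2 + B * x ^ 2).
  { assert (S ^ 2 * (x ^ 2 * y ^ 2) <= A * B * (x ^ 2 * y ^ 2))
      by (apply Rmult_le_compat_r; [nra | lra]).
    assert (0 <= (A * y ^ 2 - B * x ^ 2) ^ 2) by apply pow2_ge_0.
    assert (0 <= A * y ^ 2 + B * x ^ 2) by nra.
    assert ((2 * S * x * y) ^ 2 <= (A * y ^ 2 + B * x ^ 2) ^ 2) by nra.
    nra. }
  nra.
Qed.

Lemma sumR_cross_le d a b :
  sumR d (fun k => a k * b k)
  <= sqrt (sumR d (fun k => a k ^ 2)) * sqrt (sumR d (fun k => b k ^ 2)).
Proof.
  rewrite <- sqrt_mult by apply sumR_sqr_ge0.
  apply Rsqr_incr_0_var; [|apply sqrt_pos].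
  rewrite Rsqr_sqrt by (apply Rmult_le_pos; apply sumR_sqr_ge0).
  rewrite Rsqr_pow2; apply sumR_cauchy_schwarz.
Qed.

Lemma dist_nonneg d p q : 0 <= dist d p q.
Proof. apply sqrt_pos. Qed.

Lemma dist_sym d p q : dist d p q = dist d q p.
Proof. unfold dist; f_equal; apply sumR_ext; intros; ring. Qed.

Lemma dist_triangle d p x q : dist d p q <= dist d p x + dist d x q.
Proof.
  unfold dist.
  set (a := fun k => p k - x k); set (b := fun k => x k - q k).
  assert (Hsplit : sumR d (fun k => (p k - q k) ^ 2)
    = sumR d (fun k => a k ^ 2) + 2 * sumR d (fun k => a k * b k)
      + sumR d (fun k => b k ^ 2)).
  { unfold a, b; clear a b. induction d as [|d IH]; cbn [sumR]; [ring|].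
    rewrite IH; ring. }
  rewrite Hsplit.
  pose proof (sumR_cross_le d a b) as Hcross.
  change (sumR d (fun k => (p k - x k) ^ 2)) with (sumR d (fun k => a k ^ 2)).
  change (sumR d (fun k => (x k - q k) ^ 2)) with (sumR d (fun k => b k ^ 2)).
  set (A := sumR d (fun k => a k ^ 2)) in *; set (B := sumR d (fun k => b k ^ 2)) in *.
  assert (HA : 0 <= A) by apply sumR_sqr_ge0.
  assert (HB : 0 <= B) by apply sumR_sqr_ge0.
  pose proof (sqrt_pos A); pose proof (sqrt_pos B).
  pose proof (sqrt_sqrt A HA); pose proof (sqrt_sqrt B HB).
  rewrite <- (sqrt_square (sqrt A + sqrt B)) by lra.
  apply sqrt_le_1_alt; nra.
Qed.

(* When [u] is the center itself every boundary point is farthest; we take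
   the one in direction of the first axis. *)
Definition farthest_point (d : nat) (c : nat -> R) (r : R) (u : nat -> R)
  : nat -> R :=
  fun k => if Req_EM_T (dist d u c) 0 then c k + (if Nat.eqb k 0 then r else 0)
           else c k + r * (c k - u k) / dist d u c.

Lemma farthest_point_spec d c r u : (1 <= d)%nat -> 0 <= r ->
  dist d (farthest_point d c r u) c = r /\
  dist d u (farthest_point d c r u) = dist d u c + r.
Proof.
  intros Hd Hr; unfold farthest_point.
  destruct (Req_EM_T (dist d u c) 0) as [E|E].
  - assert (Huc : forall k, (k < d)%nat -> u k = c k).
    { intros k Hk.
      assert (Hsq : sumR d (fun k => (u k - c k) ^ 2) = 0)
        by (apply sqrt_eq_0; [apply sumR_sqr_ge0 | exact E]).
      pose proof (sumR_eq0 _ _ (fun k _ => pow2_ge_0 (u k - c k)) Hsq k Hk); nra. }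
    rewrite E; unfold dist.
    rewrite (sumR_ext d _ (fun k => (if Nat.eqb k 0 then r else 0) ^ 2))
      by (intros; ring).
    rewrite (sumR_ext d (fun k => (u k - _) ^ 2)
               (fun k => (if Nat.eqb k 0 then r else 0) ^ 2))
      by (intros k Hk; rewrite Huc by exact Hk; ring).
    rewrite sumR_indicator0, sqrt_pow2 by assumption; split; ring.
  - set (delta := dist d u c) in *.
    assert (Hdelta : 0 < delta) by (assert (0 <= delta) by apply dist_nonneg; lra).
    assert (Hsq : sumR d (fun k => (u k - c k) ^ 2) = delta ^ 2)
      by (unfold delta, dist; rewrite pow2_sqrt; [reflexivity | apply sumR_sqr_ge0]).
    unfold dist; split.
    + rewrite (sumR_ext d _ (fun k => (r / delta) ^ 2 * (u k - c k) ^ 2))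
        by (intros; field; lra).
      rewrite sumR_scal, Hsq; apply sqrt_lem_1; [nra | lra | field; lra].
    + rewrite (sumR_ext d _ (fun k => (1 + r / delta) ^ 2 * (u k - c k) ^ 2))
        by (intros; field; lra).
      rewrite sumR_scal, Hsq; apply sqrt_lem_1;
        [apply Rmult_le_pos; [apply pow2_ge_0 | nra] | lra | field; lra].
Qed.

Fixpoint fc_column (cell : nat -> R -> R) (i : nat) : R :=
  cell i (match i with O => 0 | S i' => fc_column cell i' end).

(* [fc_table D j i] is the value H(i, j) of the recurrence of the header, with
   [D i j] the distance from [a_i] to [b_j]. *)
Fixpoint fc_table (D : nat -> nat -> R) (j : nat) : nat -> R :=
  match j with
  | O => fc_column (fun i h => Rmax (D i O) h)
  | S j' => fc_column (fun i h => Rmin (fc_table D j' i) (Rmax (D i j) h))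
  end.

Definition fc_prev (D : nat -> nat -> R) (j i : nat) : R :=
  match i with O => 0 | S i' => fc_table D j i' end.

Lemma fc_table_0 D i : fc_table D 0 i = Rmax (D i 0%nat) (fc_prev D 0 i).
Proof. destruct i; reflexivity. Qed.

Lemma fc_table_S D j i :
  fc_table D (S j) i = Rmin (fc_table D j i) (Rmax (D i (S j)) (fc_prev D (S j) i)).
Proof. destruct i; reflexivity. Qed.

Lemma fc_table_antimono D j1 j2 i : (j1 <= j2)%nat -> fc_table D j2 i <= fc_table D j1 i.
Proof.
  induction 1 as [|j2 _ IH]; [lra|].
  rewrite fc_table_S; solve_Rmax.
Qed.

Lemma fc_table_le_cell D j i : fc_table D j i <= Rmax (D i j) (fc_prev D j i).
Proof. destruct j; [rewrite fc_table_0 | rewrite fc_table_S]; solve_Rmax. Qed.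

Lemma fc_table_ge0 D j i : (forall a b, 0 <= D a b) -> 0 <= fc_table D j i.
Proof.
  intros HD; revert i; induction j as [|j IH]; intros i.
  - rewrite fc_table_0; pose proof (HD i 0%nat); solve_Rmax.
  - rewrite fc_table_S; pose proof (IH i); pose proof (HD i (S j)); solve_Rmax.
Qed.

Lemma fc_table_gt0 D j i : (forall a b, (b <= j)%nat -> 0 < D a b) -> 0 < fc_table D j i.
Proof.
  revert i; induction j as [|j IH]; intros i HD.
  - rewrite fc_table_0; pose proof (HD i 0%nat ltac:(lia)); solve_Rmax.
  - rewrite fc_table_S.
    pose proof (IH i ltac:(intros; apply HD; lia)); pose proof (HD i (S j) ltac:(lia)).
    solve_Rmax.
Qed.

Lemma fc_table_monotone D D' j i :
  (forall a b, (a <= i)%nat -> (b <= j)%nat -> D a b <= D' a b) ->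
  fc_table D j i <= fc_table D' j i.
Proof.
  revert i; induction j as [|j IHj]; intros i; induction i as [|i IHi]; intros HD.
  - rewrite !fc_table_0; pose proof (HD 0%nat 0%nat ltac:(lia) ltac:(lia)); cbn; solve_Rmax.
  - rewrite !fc_table_0; cbn [fc_prev].
    pose proof (HD (S i) 0%nat ltac:(lia) ltac:(lia)).
    pose proof (IHi ltac:(intros; apply HD; lia)); solve_Rmax.
  - rewrite !fc_table_S; cbn [fc_prev].
    pose proof (HD 0%nat (S j) ltac:(lia) ltac:(lia)).
    pose proof (IHj 0%nat ltac:(intros; apply HD; lia)); solve_Rmax.
  - rewrite !fc_table_S; cbn [fc_prev].
    pose proof (HD (S i) (S j) ltac:(lia) ltac:(lia)).
    pose proof (IHj (S i) ltac:(intros; apply HD; lia)).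
    pose proof (IHi ltac:(intros; apply HD; lia)); solve_Rmax.
Qed.

Definition coupling_step (x y : nat * nat) : Prop :=
  let (i, j) := x in let (i', j') := y in
  (i' = i + 1 /\ j' = j)%nat \/ (i' = i /\ j' = j + 1)%nat \/
  (i' = i + 1 /\ j' = j + 1)%nat.

Definition grid_cost (g : nat -> nat -> R) (p : list (nat * nat)) : R :=
  fold_right Rmax 0 (map (fun ij => g (fst ij) (snd ij)) p).

Lemma fold_Rmax_init l z : 0 <= z -> fold_right Rmax z l = Rmax (fold_right Rmax 0 l) z.
Proof. intros Hz; induction l as [|x l IH]; cbn; [|rewrite IH]; solve_Rmax. Qed.

Lemma grid_cost_snoc g p x :
  grid_cost g (p ++ [x]) = Rmax (grid_cost g p) (Rmax (g (fst x) (snd x)) 0).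
Proof.
  unfold grid_cost; rewrite map_app, fold_right_app; cbn.
  apply fold_Rmax_init; solve_Rmax.
Qed.

Lemma grid_cost_le g p X :
  0 <= X -> (forall x, In x p -> g (fst x) (snd x) <= X) -> grid_cost g p <= X.
Proof.
  intros HX; unfold grid_cost; induction p as [|y p IH]; intros Hp; cbn; [lra|].
  pose proof (Hp y (or_introl eq_refl)); pose proof (IH (fun x h => Hp x (or_intror h))).
  solve_Rmax.
Qed.

Lemma coupling_nil n m : ~ coupling n m [].
Proof. intros [H _]; cbn in H; lia. Qed.

Lemma coupling_single a b x :
  coupling (S a) (S b) [x] -> x = (0%nat, 0%nat) /\ a = 0%nat /\ b = 0%nat.
Proof. intros (_ & H0 & Hlast & _); cbn in *; subst; injection Hlast as Ha Hb; split; [reflexivity|lia]. Qed.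

Lemma coupling_snoc a b p a2 b2 :
  coupling (S a) (S b) p -> coupling_step (a, b) (a2, b2) ->
  coupling (S a2) (S b2) (p ++ [(a2, b2)]).
Proof.
  intros (Hlen & H0 & Hlast & Hsteps) Hs; unfold coupling.
  rewrite length_app; cbn [length].
  split; [lia|split; [|split]].
  - rewrite app_nth1 by lia; exact H0.
  - rewrite app_nth2 by lia; replace (length p + 1 - 1 - length p)%nat with 0%nat by lia.
    cbn; f_equal; lia.
  - intros t Ht; destruct (Nat.eq_dec (t + 1) (length p)) as [Et|Nt].
    + rewrite app_nth1, app_nth2 by lia; rewrite Et, Nat.sub_diag; cbn.
      replace t with (length p - 1)%nat by lia; rewrite Hlast.
      replace (S a - 1)%nat with a by lia; replace (S b - 1)%nat with b by lia; exact Hs.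
    + rewrite !app_nth1 by lia; apply Hsteps; lia.
Qed.

Lemma coupling_snoc_inv a b p x : p <> [] -> coupling (S a) (S b) (p ++ [x]) ->
  exists a' b', coupling (S a') (S b') p /\ coupling_step (a', b') x /\ x = (a, b).
Proof.
  intros Hp (Hlen & H0 & Hlast & Hsteps).
  rewrite length_app in *; cbn [length] in *.
  assert (Hl : (1 <= length p)%nat) by (destruct p; [congruence | cbn; lia]).
  replace (length p + 1 - 1)%nat with (length p) in Hlast by lia.
  rewrite app_nth2, Nat.sub_diag in Hlast by lia; cbn in Hlast.
  destruct (nth (length p - 1) p (0%nat, 0%nat)) as [a' b'] eqn:El.
  exists a', b'; split; [|split].
  - split; [exact Hl | split; [|split]].
    + rewrite app_nth1 in H0 by lia; exact H0.
    + rewrite El; f_equal; lia.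
    + intros t Ht; specialize (Hsteps t ltac:(lia)).
      rewrite !app_nth1 in Hsteps by lia; exact Hsteps.
  - specialize (Hsteps (length p - 1)%nat ltac:(lia)).
    rewrite app_nth1, app_nth2 in Hsteps by lia.
    replace (length p - 1 + 1 - length p)%nat with 0%nat in Hsteps by lia; cbn in Hsteps.
    rewrite El in Hsteps; destruct x; exact Hsteps.
  - rewrite Hlast; f_equal; lia.
Qed.

Lemma coupling_ind (P : list (nat * nat) -> nat -> nat -> Prop) :
  P [(0%nat, 0%nat)] 0%nat 0%nat ->
  (forall p a b a2 b2, coupling (S a) (S b) p -> P p a b ->
     coupling_step (a, b) (a2, b2) -> P (p ++ [(a2, b2)]) a2 b2) ->
  forall p a b, coupling (S a) (S b) p -> P p a b.
Proof.
  intros Hbase Hstep p; induction p as [|x p IH] using rev_ind; intros a b Hc.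
  - exfalso; exact (coupling_nil _ _ Hc).
  - destruct p as [|y p].
    + destruct (coupling_single a b x Hc) as (-> & -> & ->); exact Hbase.
    + destruct (coupling_snoc_inv a b (y :: p) x ltac:(discriminate) Hc)
        as (a' & b' & Hc' & Hs & ->).
      eapply Hstep; eauto.
Qed.

Lemma coupling_step_le a b a2 b2 : coupling_step (a, b) (a2, b2) ->
  (a <= a2 <= a + 1 /\ b <= b2 <= b + 1)%nat.
Proof. intros [[-> ->]|[[-> ->]|[-> ->]]]; lia. Qed.

Lemma coupling_In_le a b p x :
  coupling (S a) (S b) p -> In x p -> (fst x <= a /\ snd x <= b)%nat.
Proof.
  intros Hc; revert x.
  apply (coupling_ind (fun p a b => forall x, In x p -> (fst x <= a /\ snd x <= b)%nat));
    [| |exact Hc]; clear.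
  - intros x [<-|[]]; cbn; lia.
  - intros p a b a2 b2 _ IH Hs x Hx; apply coupling_step_le in Hs.
    apply in_app_or in Hx; destruct Hx as [Hx|[<-|[]]]; [apply IH in Hx|]; cbn; lia.
Qed.

Lemma coupling_last_In a b p : coupling (S a) (S b) p -> In (a, b) p.
Proof.
  intros Hc; destruct Hc as (Hlen & _ & Hlast & _).
  replace (a, b) with (nth (length p - 1) p (0%nat, 0%nat))
    by (rewrite Hlast; f_equal; lia).
  apply nth_In; lia.
Qed.

Lemma coupling_visits_row a b p : coupling (S a) (S b) p ->
  forall l, (l <= a)%nat -> exists t, (t <= b)%nat /\ In (l, t) p.
Proof.
  intros Hc.
  apply (coupling_ind (fun p a b => forall l, (l <= a)%nat ->
                         exists t, (t <= b)%nat /\ In (l, t) p)); [| |exact Hc]; clear.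
  - intros l Hl; exists 0%nat; split; [lia|]; left; f_equal; lia.
  - intros p a b a2 b2 _ IH Hs l Hl; apply coupling_step_le in Hs.
    destruct (Nat.le_gt_cases l a) as [Hla|Hla].
    + destruct (IH l Hla) as (t & Ht & Hin); exists t; split; [lia|].
      apply in_or_app; left; exact Hin.
    + exists b2; split; [lia|]; apply in_or_app; right; left; f_equal; lia.
Qed.

Definition increasing_upto (s : nat -> nat) (t : nat) : Prop :=
  forall t', (t' < t)%nat -> (s t' < s (S t'))%nat.

Lemma increasing_upto_lt s t t1 t2 :
  increasing_upto s t -> (t1 < t2 <= t)%nat -> (s t1 < s t2)%nat.
Proof.
  intros Hs [H12 H2t]; induction H12 as [|t2 H12 IH].
  - apply Hs; lia.
  - specialize (IH ltac:(lia)); specialize (Hs t2 ltac:(lia)); lia.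
Qed.

Lemma subseq_idx_increasing k m s : subseq_idx k m s -> increasing_upto s (k - 1).
Proof. intros (_ & _ & Hs) t Ht; rewrite <- Nat.add_1_r; apply Hs; lia. Qed.

Section Lower_bound.
Variable D : nat -> nat -> R.
Hypothesis D_ge0 : forall a b, 0 <= D a b.

Lemma fc_table_le_cost s p a t j :
  coupling (S a) (S t) p -> increasing_upto s t -> (s t <= j)%nat ->
  fc_table D j a <= grid_cost (fun x y => D x (s y)) p.
Proof.
  intros Hc; revert j.
  apply (coupling_ind (fun p a t => forall j, increasing_upto s t -> (s t <= j)%nat ->
           fc_table D j a <= grid_cost (fun x y => D x (s y)) p)); [| |exact Hc];
    clear p a t Hc.
  - intros j _ Hj; unfold grid_cost; cbn.
    pose proof (fc_table_antimono D (s 0%nat) j 0 Hj).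
    pose proof (fc_table_le_cell D (s 0%nat) 0); cbn [fc_prev] in *; solve_Rmax.
  - intros p a b a2 b2 _ IH Hstep j Hs Hj; rewrite grid_cost_snoc; cbn [fst snd].
    destruct Hstep as [[-> ->]|[[-> ->]|[-> ->]]]; rewrite ?Nat.add_1_r in *.
    + specialize (IH (s b) Hs ltac:(lia)).
      pose proof (fc_table_antimono D (s b) j (S a) Hj).
      pose proof (fc_table_le_cell D (s b) (S a)).
      pose proof (D_ge0 (S a) (s b)); cbn [fc_prev] in *; solve_Rmax.
    + assert (s b < s (S b))%nat by (apply Hs; lia).
      specialize (IH (s b) ltac:(intros t Ht; apply Hs; lia) ltac:(lia)).
      pose proof (fc_table_antimono D (s b) j a ltac:(lia)).
      pose proof (D_ge0 a (s (S b))); solve_Rmax.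
    + assert (s b < s (S b))%nat by (apply Hs; lia).
      specialize (IH (s b) ltac:(intros t Ht; apply Hs; lia) ltac:(lia)).
      pose proof (fc_table_antimono D (s (S b)) j (S a) Hj).
      pose proof (fc_table_le_cell D (s (S b)) (S a)).
      pose proof (fc_table_antimono D (s b) (s (S b)) a ltac:(lia)).
      pose proof (D_ge0 (S a) (s (S b))); cbn [fc_prev] in *; solve_Rmax.
Qed.

Lemma fc_table_le_subseq_cost n m k s p : (1 <= n)%nat ->
  subseq_idx k m s -> coupling n k p ->
  fc_table D (m - 1) (n - 1) <= grid_cost (fun x y => D x (s y)) p.
Proof.
  intros Hn Hsub Hc; pose proof Hsub as (Hk & Hbound & _).
  apply (fc_table_le_cost s p (n - 1) (k - 1)).
  - replace (S (n - 1)) with n by lia; replace (S (k - 1)) with k by lia; exact Hc.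
  - exact (subseq_idx_increasing k m s Hsub).
  - specialize (Hbound (k - 1)%nat ltac:(lia)); lia.
Qed.
End Lower_bound.

Definition fc_witness (D : nat -> nat -> R) (j i : nat) (X : R) : Prop :=
  exists k s p, subseq_idx k (S j) s /\ coupling (S i) k p /\
    forall x, In x p -> D (fst x) (s (snd x)) <= X.

Lemma fc_witness_skip D j i X : fc_witness D j i X -> fc_witness D (S j) i X.
Proof.
  intros (k & s & p & (Hk & Hbound & Hs) & Hc & Hcost).
  exists k, s, p; split; [|auto].
  split; [exact Hk|split; [|exact Hs]]; intros t Ht; specialize (Hbound t Ht); lia.
Qed.

Lemma fc_witness_first_row D j : fc_witness D j 0 (Rmax (D 0%nat j) 0).
Proof.
  exists 1%nat, (fun _ => j), [(0%nat, 0%nat)].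
  split; [split; [lia|split]; intros; lia|split].
  - repeat split; cbn; [lia|intros; lia].
  - intros x [<-|[]]; cbn; solve_Rmax.
Qed.

Lemma fc_witness_next_row D j i X :
  fc_witness D j i X -> fc_witness D j (S i) (Rmax (D (S i) j) X).
Proof.
  intros (k & s & p & (Hk & Hbound & Hs) & Hc & Hcost).
  assert (Hc' : coupling (S i) (S (k - 1)) p) by (replace (S (k - 1)) with k by lia; exact Hc).
  assert (Hcol : forall x, In x p -> (snd x < k)%nat)
    by (intros x Hx; pose proof (coupling_In_le _ _ _ x Hc' Hx); lia).
  destruct (Nat.eq_dec (s (k - 1)%nat) j) as [Ej|Nj].
  - (* [b_j] already ends the subsequence: match [a_(i+1)] with it too *)
    exists k, s, (p ++ [(S i, (k - 1)%nat)]); split; [split; auto|split].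
    + pose proof (coupling_snoc i (k - 1) p (S i) (k - 1) Hc' ltac:(left; split; lia)).
      replace (S (k - 1)) with k in * by lia; assumption.
    + intros x Hx; apply in_app_or in Hx; destruct Hx as [Hx|[<-|[]]].
      * specialize (Hcost x Hx); solve_Rmax.
      * cbn; rewrite Ej; solve_Rmax.
  - (* otherwise append [b_j] to the subsequence and move diagonally *)
    assert (Hlt : (s (k - 1) < j)%nat) by (pose proof (Hbound (k - 1)%nat ltac:(lia)); lia).
    exists (S k), (fun t => if Nat.ltb t k then s t else j), (p ++ [(S i, k)]).
    split; [split; [lia|split]|split].
    + intros t Ht; destruct (Nat.ltb_spec t k); [apply Hbound|]; lia.
    + intros t Ht; destruct (Nat.ltb_spec t k), (Nat.ltb_spec (t + 1) k); try lia.
      * apply Hs; lia.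
      * replace t with (k - 1)%nat by lia; exact Hlt.
    + apply (coupling_snoc i (k - 1)); [exact Hc'|right; right; split; lia].
    + intros x Hx; apply in_app_or in Hx; destruct Hx as [Hx|[<-|[]]].
      * specialize (Hcol x Hx); specialize (Hcost x Hx).
        destruct (Nat.ltb_spec (snd x) k); [solve_Rmax|lia].
      * cbn [fst snd]; rewrite Nat.ltb_irrefl; solve_Rmax.
Qed.

Lemma fc_table_witness D j i : fc_witness D j i (fc_table D j i).
Proof.
  revert i; induction j as [|j IHj]; intros i; induction i as [|i IHi].
  - rewrite fc_table_0; apply fc_witness_first_row.
  - rewrite fc_table_0; apply fc_witness_next_row, IHi.
  - rewrite fc_table_S; cbn [fc_prev]; unfold Rmin; destruct Rle_dec.
    + apply fc_witness_skip, IHj.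
    + apply fc_witness_first_row.
  - rewrite fc_table_S; cbn [fc_prev]; unfold Rmin; destruct Rle_dec.
    + apply fc_witness_skip, IHj.
    + apply fc_witness_next_row, IHi.
Qed.

Lemma frechet_c_fc_table d n m A B : (1 <= n)%nat -> (1 <= m)%nat ->
  frechet_c d n m A B (fc_table (fun a b => dist d (A a) (B b)) (m - 1) (n - 1)).
Proof.
  intros Hn Hm; set (D := fun a b => dist d (A a) (B b)).
  assert (D_ge0 : forall a b, 0 <= D a b) by (intros; apply dist_nonneg).
  assert (Hcost : forall s p, coupling_cost d A (fun t => B (s t)) p
                                = grid_cost (fun x y => D x (s y)) p) by reflexivity.
  split.
  - destruct (fc_table_witness D (m - 1) (n - 1)) as (k & s & p & Hsub & Hc & Hle).
    replace (S (m - 1)) with m in Hsub by lia; replace (S (n - 1)) with n in Hc by lia.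
    exists k, s; split; [exact Hsub|split].
    + exists p; split; [exact Hc|]; rewrite Hcost; apply Rle_antisym.
      * apply grid_cost_le; [apply fc_table_ge0, D_ge0 | exact Hle].
      * exact (fc_table_le_subseq_cost D D_ge0 n m k s p Hn Hsub Hc).
    + intros p' Hc'; rewrite Hcost.
      exact (fc_table_le_subseq_cost D D_ge0 n m k s p' Hn Hsub Hc').
  - intros k s v Hsub [[p [Hc <-]] _]; rewrite Hcost.
    exact (fc_table_le_subseq_cost D D_ge0 n m k s p Hn Hsub Hc).
Qed.

Section Adversary.
Variables (d n m : nat) (U C : nat -> nat -> R) (r : nat -> R).
Hypotheses (Hd : (1 <= d)%nat) (Hn : (1 <= n)%nat) (Hm : (1 <= m)%nat)
  (Hr : forall j, (j < m)%nat -> 0 < r j).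

Let E a b := dist d (U a) (C b) + r b.
Let v := fc_table E (m - 1) (n - 1).

(* [v <= E i j] iff ball [j] has a point at distance at least [v] from [u_i]. *)
Fixpoint next_far (j fuel p : nat) : nat :=
  match fuel with
  | O => p
  | S f => if Rle_dec v (E p j) then p else next_far j f (S p)
  end.

Lemma next_far_spec j f p : (p <= next_far j f p <= p + f)%nat /\
  (forall i, (p <= i < next_far j f p)%nat -> E i j < v) /\
  ((next_far j f p < p + f)%nat -> v <= E (next_far j f p) j).
Proof.
  revert p; induction f as [|f IH]; intros p; cbn.
  - repeat split; intros; lia.
  - destruct Rle_dec as [Hle|Hlt]; [repeat split; intros; auto; lia|].
    destruct (IH (S p)) as (Hb & Hbelow & Hfar); repeat split; [lia|lia| |].
    + intros i Hi; destruct (Nat.eq_dec i p) as [->|]; [lra|apply Hbelow; lia].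
    + intros; apply Hfar; lia.
Qed.

(* [progress (S j)] is the row p(j) of the header. *)
Fixpoint progress (j : nat) : nat :=
  match j with O => O | S j' => next_far j' (n - progress j') (progress j') end.

Lemma progress_le j : (progress j <= n)%nat.
Proof.
  induction j as [|j IH]; cbn; [lia|].
  destruct (next_far_spec j (n - progress j) (progress j)) as [Hb _]; lia.
Qed.

Lemma progress_mono j1 j2 : (j1 <= j2)%nat -> (progress j1 <= progress j2)%nat.
Proof.
  induction 1 as [|j2 _ IH]; [lia|]; cbn.
  destruct (next_far_spec j2 (n - progress j2) (progress j2)) as [Hb _]; lia.
Qed.

Lemma v_gt0 : 0 < v.
Proof.
  apply fc_table_gt0; intros a b Hb; unfold E.
  pose proof (dist_nonneg d (U a) (C b)); pose proof (Hr b ltac:(lia)); lra.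
Qed.

Lemma E_below_progress j i :
  (progress j <= i < progress (S j))%nat -> E i j < v.
Proof.
  destruct (next_far_spec j (n - progress j) (progress j)) as (_ & Hbelow & _).
  exact (Hbelow i).
Qed.

Lemma fc_table_below_progress j i : (i < progress (S j))%nat -> fc_table E j i < v.
Proof.
  revert i; induction j as [|j IHj]; intros i; induction i as [|i IHi]; intros Hi.
  - rewrite fc_table_0; cbn [fc_prev].
    pose proof (E_below_progress 0 0 ltac:(change (progress 0) with 0%nat; lia)); pose proof v_gt0.
    solve_Rmax.
  - rewrite fc_table_0; cbn [fc_prev].
    pose proof (E_below_progress 0 (S i) ltac:(change (progress 0) with 0%nat; lia)).
    specialize (IHi ltac:(lia)); solve_Rmax.
  - rewrite fc_table_S; cbn [fc_prev].
    destruct (Nat.lt_ge_cases 0 (progress (S j))) as [Hlt|Hge].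
    + specialize (IHj 0%nat Hlt); solve_Rmax.
    + pose proof (E_below_progress (S j) 0 ltac:(lia)); pose proof v_gt0; solve_Rmax.
  - rewrite fc_table_S; cbn [fc_prev]; specialize (IHi ltac:(lia)).
    destruct (Nat.lt_ge_cases (S i) (progress (S j))) as [Hlt|Hge].
    + specialize (IHj (S i) Hlt); solve_Rmax.
    + pose proof (E_below_progress (S j) (S i) ltac:(lia)); solve_Rmax.
Qed.

Lemma progress_lt : (progress m < n)%nat.
Proof.
  destruct (Nat.lt_ge_cases (progress m) n) as [|Hge]; [assumption|exfalso].
  pose proof (fc_table_below_progress (m - 1) (n - 1)) as Hbelow.
  replace (S (m - 1)) with m in Hbelow by lia.
  specialize (Hbelow ltac:(lia)); unfold v in Hbelow; lra.
Qed.

Definition adversary (j : nat) : nat -> R :=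
  farthest_point d (C j) (r j) (U (progress (S j))).

Let Dadv a b := dist d (U a) (adversary b).

Lemma adversary_realization : realization d m C r adversary.
Proof.
  intros j Hj; pose proof (Hr j Hj); unfold adversary.
  destruct (farthest_point_spec d (C j) (r j) (U (progress (S j))) Hd ltac:(lra))
    as [-> _]; lra.
Qed.

Lemma adversary_far j : (j < m)%nat -> v <= Dadv (progress (S j)) j.
Proof.
  intros Hj; pose proof (Hr j Hj); unfold Dadv, adversary.
  destruct (farthest_point_spec d (C j) (r j) (U (progress (S j))) Hd ltac:(lra))
    as [_ ->].
  destruct (next_far_spec j (n - progress j) (progress j)) as (_ & _ & Hfar).
  pose proof (progress_mono (S j) m ltac:(lia)); pose proof progress_lt.
  pose proof (progress_le j); apply Hfar; cbn [progress] in *; lia.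
Qed.

Lemma Dadv_le_E a b : (b < m)%nat -> Dadv a b <= E a b.
Proof.
  intros Hb; unfold Dadv, E.
  pose proof (dist_triangle d (U a) (C b) (adversary b)).
  rewrite (dist_sym d (C b) (adversary b)) in H.
  pose proof (adversary_realization b Hb); lra.
Qed.

(* A cheap coupling can only enter row [progress (S j)] while matched with some
   [b_j'] with [j' > j], since pairing it with [b_j] costs at least [v]. *)
Lemma cheap_coupling_below_progress (s : nat -> nat) p a t :
  coupling (S a) (S t) p -> increasing_upto s t ->
  (forall t', (t' <= t)%nat -> (s t' < m)%nat) ->
  (forall x, In x p -> Dadv (fst x) (s (snd x)) < v) ->
  forall x, In x p -> (fst x < progress (S (s (snd x))))%nat.
Proof.
  intros Hc.
  refine (coupling_ind (fun p a t => increasing_upto s t ->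
    (forall t', (t' <= t)%nat -> (s t' < m)%nat) ->
    (forall x, In x p -> Dadv (fst x) (s (snd x)) < v) ->
    forall x, In x p -> (fst x < progress (S (s (snd x))))%nat) _ _ p a t Hc);
    clear p a t Hc.
  - intros _ Hsm Hcheap x [<-|[]]; cbn.
    destruct (Nat.lt_ge_cases 0 (progress (S (s 0%nat)))) as [|Hge]; [assumption|].
    pose proof (adversary_far (s 0%nat) (Hsm 0%nat ltac:(lia))).
    pose proof (Hcheap (0%nat, 0%nat) (or_introl eq_refl)); cbn in *.
    rewrite Nat.le_0_r in Hge; rewrite Hge in *; lra.
  - intros p a b a2 b2 Hc IH Hstep Hs Hsm Hcheap x Hx.
    pose proof (coupling_step_le _ _ _ _ Hstep).
    specialize (IH ltac:(intros t Ht; apply Hs; lia) ltac:(intros; apply Hsm; lia)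
                  ltac:(intros y Hy; apply Hcheap, in_or_app; left; exact Hy)).
    apply in_app_or in Hx; destruct Hx as [Hx|[<-|[]]]; [apply IH, Hx|]; cbn.
    destruct (Nat.lt_ge_cases a2 (progress (S (s b2)))) as [|Hge]; [assumption|exfalso].
    destruct (coupling_visits_row a2 b2 _ (coupling_snoc _ _ _ _ _ Hc Hstep) _ Hge)
      as (t & Ht & Hin).
    destruct (Nat.eq_dec t b2) as [->|Hne].
    + pose proof (Hcheap _ Hin); pose proof (adversary_far (s b2) (Hsm b2 ltac:(lia))).
      cbn in *; lra.
    + apply in_app_or in Hin; destruct Hin as [Hin|[Heq|[]]]; [|injection Heq; lia].
      pose proof (IH _ Hin); cbn [fst snd] in *.
      pose proof (increasing_upto_lt s b2 t b2 Hs ltac:(lia)).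
      pose proof (progress_mono (S (s t)) (s b2) ltac:(lia)).
      pose proof (progress_mono (s b2) (S (s b2)) ltac:(lia)); lia.
Qed.

Lemma fc_table_adversary : fc_table Dadv (m - 1) (n - 1) = v.
Proof.
  apply Rle_antisym.
  - apply fc_table_monotone; intros a b _ Hb; apply Dadv_le_E; lia.
  - destruct (Rle_dec v (fc_table Dadv (m - 1) (n - 1))) as [|Hlt]; [assumption|exfalso].
    destruct (fc_table_witness Dadv (m - 1) (n - 1))
      as (k & s & p & Hsub & Hc & Hcost).
    pose proof Hsub as (Hk & Hbound & _).
    replace (S (m - 1)) with m in Hbound by lia.
    assert (Hc' : coupling (S (n - 1)) (S (k - 1)) p)
      by (replace (S (k - 1)) with k by lia; exact Hc).
    pose proof (cheap_coupling_below_progress s p (n - 1) (k - 1) Hc'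
      (subseq_idx_increasing _ _ _ Hsub) ltac:(intros t Ht; apply Hbound; lia)
      ltac:(intros x Hx; specialize (Hcost x Hx); lra)
      _ (coupling_last_In _ _ _ Hc')) as Hrow.
    cbn [fst snd] in Hrow; pose proof (Hbound (k - 1)%nat ltac:(lia)).
    pose proof (progress_mono (S (s (k - 1)%nat)) m ltac:(lia)).
    pose proof progress_lt; lia.
Qed.

End Adversary.

Theorem frechet_max1_fc_table d n m U C r :
  (1 <= d)%nat -> (1 <= n)%nat -> (1 <= m)%nat -> (forall j, (j < m)%nat -> 0 < r j) ->
  frechet_max1 d n m U C r
    (fc_table (fun a b => dist d (U a) (C b) + r b) (m - 1) (n - 1)).
Proof.
  intros Hd Hn Hm Hr; split.
  - exists (adversary d n m U C r); split; [apply adversary_realization; assumption|].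
    rewrite <- (fc_table_adversary d n m U C r Hd Hn Hm Hr).
    apply frechet_c_fc_table; assumption.
  - intros B v' HB Hf.
    apply Rle_trans with (fc_table (fun a b => dist d (U a) (B b)) (m - 1) (n - 1)).
    + destruct Hf as [_ Hmin].
      destruct (frechet_c_fc_table d n m U B Hn Hm) as [(k & s & Hs & Hfr) _].
      exact (Hmin k s _ Hs Hfr).
    + apply fc_table_monotone; intros a b _ Hb.
      pose proof (dist_triangle d (U a) (C b) (B b)).
      rewrite (dist_sym d (C b) (B b)) in H; pose proof (HB b ltac:(lia)); lra.
Qed.

Definition reach (P : list instr) (Sp : nat) (s : state) (T : nat) (Q : state -> Prop)
  : Prop :=
  exists t s', (t <= T)%nat /\ exec P Sp t s s' /\ Q s'.

Section Reach.
Variables (P : list instr) (Sp : nat).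

Lemma reach_done s T (Q : state -> Prop) : Q s -> reach P Sp s T Q.
Proof. intros HQ; exists 0%nat, s; repeat split; [lia|constructor|exact HQ]. Qed.

Lemma reach_step s s1 T Q :
  (forall a, In a (accessed P s) -> (a < Sp)%nat) -> step P s s1 ->
  reach P Sp s1 T Q -> reach P Sp s (S T) Q.
Proof.
  intros Ha Hs (t & s' & Ht & He & HQ); exists (S t), s'.
  repeat split; [lia|econstructor; eauto|exact HQ].
Qed.

Lemma exec_trans t1 t2 s s1 s2 :
  exec P Sp t1 s s1 -> exec P Sp t2 s1 s2 -> exec P Sp (t1 + t2) s s2.
Proof. induction 1; intros; cbn; [assumption|econstructor; eauto]. Qed.

Lemma reach_trans s T1 T2 (Q1 Q : state -> Prop) :
  reach P Sp s T1 Q1 -> (forall s1, Q1 s1 -> reach P Sp s1 T2 Q) ->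
  reach P Sp s (T1 + T2) Q.
Proof.
  intros (t1 & s1 & H1 & E1 & Q1s) HQ.
  destruct (HQ s1 Q1s) as (t2 & s2 & H2 & E2 & Qs).
  exists (t1 + t2)%nat, s2; repeat split; [lia|eapply exec_trans; eauto|exact Qs].
Qed.

Lemma reach_weaken s T1 T2 Q : (T1 <= T2)%nat -> reach P Sp s T1 Q -> reach P Sp s T2 Q.
Proof. intros H (t & s' & Ht & E & HQ); exists t, s'; repeat split; [lia|assumption..]. Qed.

Lemma reach_loop (Inv : nat -> state -> Prop) N Tb :
  (forall k s, (k < N)%nat -> Inv k s -> reach P Sp s Tb (Inv (S k))) ->
  forall s, Inv 0%nat s -> reach P Sp s (N * Tb) (Inv N).
Proof.
  intros Hbody.
  assert (Hrest : forall rest k s, (k + rest = N)%nat -> Inv k s ->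
                    reach P Sp s (rest * Tb) (Inv N)).
  { induction rest as [|rest IH]; intros k s Hk Hs; cbn.
    - replace N with k by lia; apply reach_done, Hs.
    - apply reach_trans with (Inv (S k)); [apply Hbody; [lia|exact Hs]|].
      intros s1 H1; apply (IH (S k)); [lia|exact H1]. }
  intros s Hs; exact (Hrest N 0%nat s eq_refl Hs).
Qed.

Variables (q T : nat) (I : nat -> Z) (Rm : nat -> R) (Q : state -> Prop).

Ltac step_with Hq tac :=
  eapply reach_step;
  [ unfold accessed; cbn [pc imem]; rewrite Hq; cbn;
    intros a Ha; repeat (destruct Ha as [<-|Ha]; [assumption|]); destruct Ha
  | unfold step; cbn [pc imem rmem]; rewrite Hq; tac
  | eassumption ].
Ltac step_by Hq := step_with Hq reflexivity.

Lemma reach_IConst i z : nth q P Halt = IConst i z -> (i < Sp)%nat ->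
  reach P Sp (mkState (S q) (updI I i z) Rm) T Q -> reach P Sp (mkState q I Rm) (S T) Q.
Proof. intros Hq **; step_by Hq. Qed.

Lemma reach_IAdd i j k : nth q P Halt = IAdd i j k ->
  (i < Sp)%nat -> (j < Sp)%nat -> (k < Sp)%nat ->
  reach P Sp (mkState (S q) (updI I i (I j + I k)%Z) Rm) T Q ->
  reach P Sp (mkState q I Rm) (S T) Q.
Proof. intros Hq **; step_by Hq. Qed.

Lemma reach_ISub i j k : nth q P Halt = ISub i j k ->
  (i < Sp)%nat -> (j < Sp)%nat -> (k < Sp)%nat ->
  reach P Sp (mkState (S q) (updI I i (I j - I k)%Z) Rm) T Q ->
  reach P Sp (mkState q I Rm) (S T) Q.
Proof. intros Hq **; step_by Hq. Qed.

Lemma reach_IMul i j k : nth q P Halt = IMul i j k ->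
  (i < Sp)%nat -> (j < Sp)%nat -> (k < Sp)%nat ->
  reach P Sp (mkState (S q) (updI I i (I j * I k)%Z) Rm) T Q ->
  reach P Sp (mkState q I Rm) (S T) Q.
Proof. intros Hq **; step_by Hq. Qed.

Lemma reach_RofI i j : nth q P Halt = RofI i j -> (i < Sp)%nat -> (j < Sp)%nat ->
  reach P Sp (mkState (S q) I (updR Rm i (IZR (I j)))) T Q ->
  reach P Sp (mkState q I Rm) (S T) Q.
Proof. intros Hq **; step_by Hq. Qed.

Lemma reach_RAdd i j k : nth q P Halt = RAdd i j k ->
  (i < Sp)%nat -> (j < Sp)%nat -> (k < Sp)%nat ->
  reach P Sp (mkState (S q) I (updR Rm i (Rm j + Rm k))) T Q ->
  reach P Sp (mkState q I Rm) (S T) Q.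
Proof. intros Hq **; step_by Hq. Qed.

Lemma reach_RSub i j k : nth q P Halt = RSub i j k ->
  (i < Sp)%nat -> (j < Sp)%nat -> (k < Sp)%nat ->
  reach P Sp (mkState (S q) I (updR Rm i (Rm j - Rm k))) T Q ->
  reach P Sp (mkState q I Rm) (S T) Q.
Proof. intros Hq **; step_by Hq. Qed.

Lemma reach_RMul i j k : nth q P Halt = RMul i j k ->
  (i < Sp)%nat -> (j < Sp)%nat -> (k < Sp)%nat ->
  reach P Sp (mkState (S q) I (updR Rm i (Rm j * Rm k))) T Q ->
  reach P Sp (mkState q I Rm) (S T) Q.
Proof. intros Hq **; step_by Hq. Qed.

Lemma reach_RSqrt i j : nth q P Halt = RSqrt i j -> (i < Sp)%nat -> (j < Sp)%nat ->
  reach P Sp (mkState (S q) I (updR Rm i (sqrt (Rm j)))) T Q ->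
  reach P Sp (mkState q I Rm) (S T) Q.
Proof. intros Hq **; step_by Hq. Qed.

Lemma reach_RLoad i j : nth q P Halt = RLoad i j ->
  (i < Sp)%nat -> (j < Sp)%nat -> (addr (I j) < Sp)%nat ->
  reach P Sp (mkState (S q) I (updR Rm i (Rm (addr (I j))))) T Q ->
  reach P Sp (mkState q I Rm) (S T) Q.
Proof. intros Hq **; step_by Hq. Qed.

Lemma reach_RStore i j : nth q P Halt = RStore i j ->
  (i < Sp)%nat -> (j < Sp)%nat -> (addr (I i) < Sp)%nat ->
  reach P Sp (mkState (S q) I (updR Rm (addr (I i)) (Rm j))) T Q ->
  reach P Sp (mkState q I Rm) (S T) Q.
Proof. intros Hq **; step_by Hq. Qed.

Lemma reach_Jmp t : nth q P Halt = Jmp t ->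
  reach P Sp (mkState t I Rm) T Q -> reach P Sp (mkState q I Rm) (S T) Q.
Proof. intros Hq **; step_by Hq. Qed.

Lemma reach_JmpILt_taken i j t : nth q P Halt = JmpILt i j t ->
  (i < Sp)%nat -> (j < Sp)%nat -> (I i < I j)%Z ->
  reach P Sp (mkState t I Rm) T Q -> reach P Sp (mkState q I Rm) (S T) Q.
Proof. intros Hq ? ? Hlt **; step_with Hq ltac:(rewrite (proj2 (Z.ltb_lt _ _) Hlt); reflexivity). Qed.

Lemma reach_JmpILt_not_taken i j t : nth q P Halt = JmpILt i j t ->
  (i < Sp)%nat -> (j < Sp)%nat -> (I j <= I i)%Z ->
  reach P Sp (mkState (S q) I Rm) T Q -> reach P Sp (mkState q I Rm) (S T) Q.
Proof. intros Hq ? ? Hge **; step_with Hq ltac:(rewrite (proj2 (Z.ltb_ge _ _) Hge); reflexivity). Qed.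

Lemma reach_JmpRLt_taken i j t : nth q P Halt = JmpRLt i j t ->
  (i < Sp)%nat -> (j < Sp)%nat -> Rm i < Rm j ->
  reach P Sp (mkState t I Rm) T Q -> reach P Sp (mkState q I Rm) (S T) Q.
Proof. intros Hq ? ? Hlt **; step_with Hq ltac:(left; split; [exact Hlt|reflexivity]). Qed.

Lemma reach_JmpRLt_not_taken i j t : nth q P Halt = JmpRLt i j t ->
  (i < Sp)%nat -> (j < Sp)%nat -> Rm j <= Rm i ->
  reach P Sp (mkState (S q) I Rm) T Q -> reach P Sp (mkState q I Rm) (S T) Q.
Proof. intros Hq ? ? Hge **; step_with Hq ltac:(right; split; [exact Hge|reflexivity]). Qed.

End Reach.

Lemma updI_eq f a z : updI f a z a = z.
Proof. unfold updI; rewrite Nat.eqb_refl; reflexivity. Qed.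

Lemma updI_neq f a z b : b <> a -> updI f a z b = f b.
Proof. unfold updI; intros H; apply Nat.eqb_neq in H; rewrite H; reflexivity. Qed.

Lemma updR_eq f a x : updR f a x a = x.
Proof. unfold updR; rewrite Nat.eqb_refl; reflexivity. Qed.

Lemma updR_neq f a x b : b <> a -> updR f a x b = f b.
Proof. unfold updR; intros H; apply Nat.eqb_neq in H; rewrite H; reflexivity. Qed.

Lemma addr_of_nat x : addr (Z.of_nat x) = x.
Proof. apply Nat2Z.id. Qed.

(* Integer registers: 0 n, 1 m, 2 d, 3 the constant 1, 4 the input length
   L = n d + m d + m, 5 the address D0 = L + 8 of the copy of the input,
   8 j, 9 i, 10 k, 11 the address of u_i, 12 that of c_j, 13 that of r_j,
   14 the address G0 = D0 + L of the column, 16 the constant 0; 6, 7 and 15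
   are scratch.  Real registers: 0 scratch, 1 the sum of squares, 2 and 3
   scratch, 4 the cell above the current one, 5 the current cell, 6 the
   constant 0.  Since the input overlaps these registers it is first copied
   to [D0, D0 + L); the current column of [fc_table] is kept in [G0, G0 + n)
   and overwritten in place.  The lines below start at the indicated
   instruction numbers. *)
Definition fmax1_program : list instr := [
  (*  0 *) IConst 3 1%Z; IMul 4 0 2; IMul 15 1 2; IAdd 4 4 15; IAdd 4 4 1;
  (*  5 *) IConst 15 8%Z; IAdd 5 4 15; IConst 6 0%Z;
  (*  8 *) JmpILt 6 4 10; Jmp 15;
  (* 10 *) RLoad 0 6; IAdd 7 5 6; RStore 7 0; IAdd 6 6 3; Jmp 8;
  (* 15 *) IAdd 14 5 4; IConst 16 0%Z; RofI 6 16; IConst 8 0%Z;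
  (* 19 *) JmpILt 8 1 21; Jmp 67;
  (* 21 *) IMul 12 8 2; IAdd 12 12 5; IMul 15 0 2; IAdd 12 12 15;
  (* 25 *) IMul 13 1 2; IAdd 13 13 15; IAdd 13 13 5; IAdd 13 13 8;
  (* 29 *) RofI 4 16; IConst 9 0%Z;
  (* 31 *) JmpILt 9 0 33; Jmp 65;
  (* 33 *) IMul 11 9 2; IAdd 11 11 5; RofI 1 16; IConst 10 0%Z;
  (* 37 *) JmpILt 10 2 39; Jmp 48;
  (* 39 *) IAdd 7 11 10; RLoad 2 7; IAdd 7 12 10; RLoad 3 7;
  (* 43 *) RSub 2 2 3; RMul 2 2 2; RAdd 1 1 2; IAdd 10 10 3; Jmp 37;
  (* 48 *) RSqrt 5 1; RLoad 2 13; RAdd 5 5 2;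
  (* 51 *) JmpRLt 5 4 53; Jmp 54; RAdd 5 4 6;
  (* 54 *) IAdd 7 14 9; JmpILt 16 8 57; Jmp 61;
  (* 57 *) RLoad 2 7; JmpRLt 2 5 60; Jmp 61; RAdd 5 2 6;
  (* 61 *) RStore 7 5; RAdd 4 5 6; IAdd 9 9 3; Jmp 31;
  (* 65 *) IAdd 8 8 3; Jmp 19;
  (* 67 *) IAdd 7 14 0; ISub 7 7 3; RLoad 0 7; Halt ].

Ltac simp_updI := repeat match goal with |- context [updI ?f ?a ?z ?b] =>
  first [rewrite (updI_eq f a z) | rewrite (updI_neq f a z b) by lia] end.
Ltac simp_updR := repeat match goal with |- context [updR ?f ?a ?z ?b] =>
  first [rewrite (updR_eq f a z) | rewrite (updR_neq f a z b) by lia] end.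
Ltac rewrite_regs := repeat match goal with
  H : ?f ?k = _ |- context [?f ?k] => rewrite H end.
Ltac nat_addr := rewrite <- ?Nat2Z.inj_add, <- ?Nat2Z.inj_mul, ?addr_of_nat.
Ltac simp_state :=
  simp_updI; rewrite_regs; nat_addr; simp_updR; rewrite_regs; rewrite ?Rplus_0_r.

Ltac current_instr := match goal with
  |- reach fmax1_program _ (mkState ?q _ _) _ _ => eval compute in (nth q fmax1_program Halt)
  end.

(* Side conditions on indirect addresses are left as goals. *)
Ltac run1 :=
  lazymatch current_instr with
  | IConst _ _ => eapply reach_IConst; [reflexivity|lia|]
  | IAdd _ _ _ => eapply reach_IAdd; [reflexivity|lia|lia|lia|]
  | ISub _ _ _ => eapply reach_ISub; [reflexivity|lia|lia|lia|]
  | IMul _ _ _ => eapply reach_IMul; [reflexivity|lia|lia|lia|]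
  | RofI _ _ => eapply reach_RofI; [reflexivity|lia|lia|]
  | RAdd _ _ _ => eapply reach_RAdd; [reflexivity|lia|lia|lia|]
  | RSub _ _ _ => eapply reach_RSub; [reflexivity|lia|lia|lia|]
  | RMul _ _ _ => eapply reach_RMul; [reflexivity|lia|lia|lia|]
  | RSqrt _ _ => eapply reach_RSqrt; [reflexivity|lia|lia|]
  | RLoad _ _ => eapply reach_RLoad; [reflexivity|lia|lia| |]
  | RStore _ _ => eapply reach_RStore; [reflexivity|lia|lia| |]
  | Jmp _ => eapply reach_Jmp; [reflexivity|]
  end; simp_state.
Ltac run_taken :=
  lazymatch current_instr with
  | JmpILt _ _ _ => eapply reach_JmpILt_taken; [reflexivity|lia|lia| |]
  | JmpRLt _ _ _ => eapply reach_JmpRLt_taken; [reflexivity|lia|lia| |]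
  end; simp_state.
Ltac run_not_taken :=
  lazymatch current_instr with
  | JmpILt _ _ _ => eapply reach_JmpILt_not_taken; [reflexivity|lia|lia| |]
  | JmpRLt _ _ _ => eapply reach_JmpRLt_not_taken; [reflexivity|lia|lia| |]
  end; simp_state.

Section Table_loops.
Variables (d n m : nat) (U C : nat -> nat -> R) (r : nat -> R) (inp : nat -> R)
  (L D0 G0 Sp : nat).
Hypotheses (Hd : (1 <= d)%nat) (Hn : (1 <= n)%nat) (Hm : (1 <= m)%nat)
  (HL : L = (n * d + m * d + m)%nat) (HD0 : D0 = (L + 8)%nat) (HG0 : G0 = (D0 + L)%nat)
  (HSp : (G0 + n + 20 <= Sp)%nat)
  (inp_U : forall i k, (i < n)%nat -> (k < d)%nat -> inp (i * d + k)%nat = U i k)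
  (inp_C : forall j k, (j < m)%nat -> (k < d)%nat -> inp (n * d + j * d + k)%nat = C j k)
  (inp_r : forall j, (j < m)%nat -> inp (n * d + m * d + j)%nat = r j).

Let E a b := dist d (U a) (C b) + r b.
Local Notation run := (reach fmax1_program Sp).

Definition fixed_regs (I : nat -> Z) : Prop :=
  I 0%nat = Z.of_nat n /\ I 1%nat = Z.of_nat m /\ I 2%nat = Z.of_nat d /\
  I 3%nat = 1%Z /\ I 5%nat = Z.of_nat D0 /\ I 14%nat = Z.of_nat G0 /\ I 16%nat = 0%Z.

Definition input_copied (Rm : nat -> R) : Prop :=
  (forall b, (b < L)%nat -> Rm (D0 + b)%nat = inp b) /\ Rm 6%nat = 0.

(* Cells above row [i] already hold column [j], the others still column [j-1]. *)
Definition column_stored (Rm : nat -> R) (j i : nat) : Prop :=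
  forall i', (i' < n)%nat ->
    ((i' < i)%nat -> Rm (G0 + i')%nat = fc_table E j i') /\
    ((i <= i')%nat -> (0 < j)%nat -> Rm (G0 + i')%nat = fc_table E (j - 1) i').

Definition row_regs (j i : nat) (I : nat -> Z) (Rm : nat -> R) : Prop :=
  fixed_regs I /\ I 8%nat = Z.of_nat j /\ I 9%nat = Z.of_nat i /\
  I 12%nat = Z.of_nat (D0 + n * d + j * d) /\
  I 13%nat = Z.of_nat (D0 + n * d + m * d + j) /\
  input_copied Rm /\ Rm 4%nat = fc_prev E j i /\ column_stored Rm j i /\ (j < m)%nat.

Lemma row_regs_updI j i I Rm a z :
  In a [6; 7; 10; 11; 15]%nat -> row_regs j i I Rm -> row_regs j i (updI I a z) Rm.
Proof.
  intros Ha Hregs; cbn in Ha; unfold row_regs, fixed_regs in *; simp_updI; tauto.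
Qed.

Lemma row_regs_updR j i I Rm a x :
  In a [1; 2; 3; 5]%nat -> row_regs j i I Rm -> row_regs j i I (updR Rm a x).
Proof.
  intros Ha (Hfix & H8 & H9 & H12 & H13 & [Hin H6] & H4 & Hcol & Hj); cbn in Ha.
  do 5 (split; [assumption|]); split; [split|split; [|split]];
    try (simp_updR; assumption).
  - intros b Hb; simp_updR; apply Hin, Hb.
  - intros i' Hi'; simp_updR; apply Hcol, Hi'.
Qed.

Ltac keep_row_regs :=
  repeat first [ apply row_regs_updI; [cbn; lia|]
               | apply row_regs_updR; [cbn; lia|] ].

Ltac close_inv Hregs :=
  apply reach_done; split; [reflexivity|];
  split; [cbn [imem rmem]; keep_row_regs; exact Hregs|];
  cbn [imem rmem]; repeat split; simp_updI; simp_updR; try assumption; try lia.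

Definition coord_inv j i k (s : state) : Prop :=
  pc s = 37%nat /\ row_regs j i (imem s) (rmem s) /\
  imem s 11%nat = Z.of_nat (D0 + i * d) /\ imem s 10%nat = Z.of_nat k /\
  rmem s 1%nat = sumR k (fun k' => (U i k' - C j k') ^ 2) /\ (k <= d)%nat /\ (i < n)%nat.

Definition row_inv j i (s : state) : Prop :=
  pc s = 31%nat /\ row_regs j i (imem s) (rmem s) /\ (i <= n)%nat.

Definition cell_inv j i q x (s : state) : Prop :=
  pc s = q /\ row_regs j i (imem s) (rmem s) /\
  imem s 7%nat = Z.of_nat (G0 + i) /\ rmem s 5%nat = x /\ (i < n)%nat.

Lemma coord_step j i k s : (k < d)%nat -> coord_inv j i k s -> run s 10 (coord_inv j i (S k)).
Proof.
  intros Hk (Hpc & Hregs & H11 & H10 & H1 & Hkd & Hi).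
  destruct s as [q I Rm]; cbn [pc imem rmem] in *; subst q.
  pose proof Hregs as ((I0 & I1 & I2 & I3 & I5 & I14 & I16) & H8 & H9 & H12 & H13 &
                       [Hin H6] & _ & _ & Hj).
  run_taken; [lia|].
  run1; run1; [nat_addr; nia|].
  run1; run1; [nat_addr; nia|].
  run1; run1; run1; run1; run1.
  rewrite <- Nat.add_assoc, Hin, inp_U by nia.
  replace (D0 + n * d + j * d + k)%nat with (D0 + (n * d + j * d + k))%nat by lia.
  rewrite Hin, inp_C by nia.
  close_inv Hregs; cbn [sumR]; ring.
Qed.

Lemma coord_loop j i s : coord_inv j i 0 s -> run s (d * 10) (coord_inv j i d).
Proof.
  apply (reach_loop _ _ (coord_inv j i)); intros k s' Hk; apply coord_step, Hk.
Qed.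

Lemma row_start j i s : (i < n)%nat -> row_inv j i s -> run s 5 (coord_inv j i 0).
Proof.
  intros Hi (Hpc & Hregs & Hin).
  destruct s as [q I Rm]; cbn [pc imem rmem] in *; subst q.
  pose proof Hregs as ((I0 & I1 & I2 & I3 & I5 & I14 & I16) & H8 & H9 & _).
  run_taken; [lia|].
  run1; run1; run1; run1.
  close_inv Hregs; f_equal; lia.
Qed.

Lemma cell_max j i s : coord_inv j i d s ->
  run s 8 (cell_inv j i 55 (Rmax (E i j) (fc_prev E j i))).
Proof.
  intros (Hpc & Hregs & H11 & H10 & H1 & Hkd & Hi).
  destruct s as [q I Rm]; cbn [pc imem rmem] in *; subst q.
  pose proof Hregs as ((I0 & I1 & I2 & I3 & I5 & I14 & I16) & H8 & H9 & H12 & H13 &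
                       [Hin H6] & H4 & _ & Hj).
  run_not_taken; [lia|].
  run1; run1; run1; [nia|].
  replace (D0 + n * d + m * d + j)%nat with (D0 + (n * d + m * d + j))%nat by lia.
  rewrite Hin, inp_r by nia.
  run1.
  change (sqrt (sumR d (fun k' => (U i k' - C j k') ^ 2)) + r j) with (E i j).
  destruct (Rlt_dec (E i j) (fc_prev E j i)) as [Hlt|Hge].
  - run_taken; [assumption|]; run1; run1.
    close_inv Hregs; solve_Rmax.
  - run_not_taken; [lra|]; run1; run1.
    close_inv Hregs; solve_Rmax.
Qed.

Lemma cell_min j i s : cell_inv j i 55 (Rmax (E i j) (fc_prev E j i)) s ->
  run s 4 (cell_inv j i 61 (fc_table E j i)).
Proof.
  intros (Hpc & Hregs & H7 & H5 & Hi).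
  destruct s as [q I Rm]; cbn [pc imem rmem] in *; subst q.
  pose proof Hregs as ((I0 & I1 & I2 & I3 & I5 & I14 & I16) & H8 & H9 & H12 & H13 &
                       [Hin H6] & H4 & Hcol & Hj).
  destruct j as [|j].
  - run_not_taken; [lia|]; run1.
    close_inv Hregs; rewrite H5, fc_table_0; reflexivity.
  - run_taken; [lia|]; run1; [lia|].
    destruct (Hcol i Hi) as [_ Hold]; rewrite Hold by lia; replace (S j - 1)%nat with j by lia.
    destruct (Rlt_dec (fc_table E j i) (Rmax (E i (S j)) (fc_prev E (S j) i))).
    + run_taken; [assumption|]; run1.
      close_inv Hregs; rewrite fc_table_S; solve_Rmax.
    + run_not_taken; [lra|]; run1.
      close_inv Hregs; rewrite fc_table_S; solve_Rmax.
Qed.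

Lemma cell_store j i s : cell_inv j i 61 (fc_table E j i) s -> run s 4 (row_inv j (S i)).
Proof.
  intros (Hpc & Hregs & H7 & H5 & Hi).
  destruct s as [q I Rm]; cbn [pc imem rmem] in *; subst q.
  destruct Hregs as ((I0 & I1 & I2 & I3 & I5 & I14 & I16) & H8 & H9 & H12 & H13 &
                     [Hin H6] & H4 & Hcol & Hj).
  run1; [lia|]; run1; run1; run1.
  apply reach_done; repeat split; cbn [pc imem rmem]; simp_updI; simp_updR;
    try assumption; try lia.
  - intros b Hb; simp_updR; apply Hin, Hb.
  - intros Hlt; destruct (Nat.eq_dec i' i) as [->|Hne]; simp_updR; [reflexivity|].
    apply (proj1 (Hcol i' ltac:(assumption))); lia.
  - intros Hle Hj0; simp_updR; apply (proj2 (Hcol i' ltac:(assumption))); lia.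
Qed.

Lemma row_step j i s : (i < n)%nat -> row_inv j i s ->
  run s (5 + d * 10 + 16) (row_inv j (S i)).
Proof.
  intros Hi Hs; rewrite <- !Nat.add_assoc.
  apply reach_trans with (coord_inv j i 0); [apply row_start; assumption|]; intros s1 H1.
  apply reach_trans with (coord_inv j i d); [apply coord_loop, H1|]; intros s2 H2.
  change 16%nat with (8 + (4 + 4))%nat.
  eapply reach_trans; [apply cell_max, H2|]; intros s3 H3.
  eapply reach_trans; [apply cell_min, H3|]; intros s4 H4.
  apply cell_store, H4.
Qed.

Lemma row_loop j s : row_inv j 0 s -> run s (n * (5 + d * 10 + 16)) (row_inv j n).
Proof.
  apply (reach_loop _ _ (row_inv j)); intros i s' Hi; apply row_step, Hi.
Qed.

Definition column_inv j (s : state) : Prop :=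
  pc s = 19%nat /\ fixed_regs (imem s) /\ imem s 8%nat = Z.of_nat j /\
  input_copied (rmem s) /\ column_stored (rmem s) j 0 /\ (j <= m)%nat.

Lemma column_start j s : (j < m)%nat -> column_inv j s -> run s 11 (row_inv j 0).
Proof.
  intros Hj (Hpc & (I0 & I1 & I2 & I3 & I5 & I14 & I16) & H8 & [Hin H6] & Hcol & Hjm).
  destruct s as [q I Rm]; cbn [pc imem rmem] in *; subst q.
  run_taken; [lia|].
  do 10 run1.
  apply reach_done; repeat split; cbn [pc imem rmem]; simp_updI; simp_updR;
    try assumption; try lia.
  - intros b Hb; simp_updR; apply Hin, Hb.
  - intros _ Hj0; apply (proj2 (Hcol i' ltac:(assumption))); lia.
Qed.

Lemma column_end j s : row_inv j n s -> run s 4 (column_inv (S j)).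
Proof.
  intros (Hpc & Hregs & Hin).
  destruct s as [q I Rm]; cbn [pc imem rmem] in *; subst q.
  destruct Hregs as ((I0 & I1 & I2 & I3 & I5 & I14 & I16) & H8 & H9 & H12 & H13 &
                     Hcop & H4 & Hcol & Hj).
  run_not_taken; [lia|]; run1; run1; run1.
  apply reach_done; repeat split; cbn [pc imem rmem]; simp_updI;
    try assumption; try lia.
  - apply Hcop.
  - apply Hcop.
  - intros Hle _; replace (S j - 1)%nat with j by lia.
    apply (proj1 (Hcol i' ltac:(assumption))); lia.
Qed.

Lemma column_step j s : (j < m)%nat -> column_inv j s ->
  run s (11 + (n * (5 + d * 10 + 16) + 4)) (column_inv (S j)).
Proof.
  intros Hj Hs.
  apply reach_trans with (row_inv j 0); [apply column_start; assumption|]; intros s1 H1.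
  apply reach_trans with (row_inv j n); [apply row_loop, H1|]; intros s2 H2.
  apply column_end, H2.
Qed.

Lemma column_loop s : column_inv 0 s ->
  run s (m * (11 + (n * (5 + d * 10 + 16) + 4))) (column_inv m).
Proof. apply (reach_loop _ _ column_inv); intros j s' Hj; apply column_step, Hj. Qed.

Lemma table_output s : column_inv m s ->
  run s 5 (fun s => halted fmax1_program s /\ rmem s 0%nat = fc_table E (m - 1) (n - 1)).
Proof.
  intros (Hpc & (I0 & I1 & I2 & I3 & I5 & I14 & I16) & H8 & _ & Hcol & _).
  destruct s as [q I Rm]; cbn [pc imem rmem] in *; subst q.
  run_not_taken; [lia|]; run1; run1; run1.
  replace (Z.of_nat (G0 + n) - 1)%Z with (Z.of_nat (G0 + (n - 1))) by lia.
  run1; [nat_addr; lia|].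
  apply reach_done; split; [reflexivity|]; cbn [rmem]; simp_updR.
  apply (proj2 (Hcol (n - 1)%nat ltac:(lia))); lia.
Qed.

End Table_loops.

Section Input_copy.
Variables (d n m : nat) (U C : nat -> nat -> R) (r : nat -> R) (L D0 G0 Sp : nat).
Hypotheses (Hd : (1 <= d)%nat) (Hn : (1 <= n)%nat) (Hm : (1 <= m)%nat)
  (HL : L = (n * d + m * d + m)%nat) (HD0 : D0 = (L + 8)%nat) (HG0 : G0 = (D0 + L)%nat)
  (HSp : (G0 + n + 20 <= Sp)%nat).

Let inp := rmem (init_state d n m U C r).
Local Notation run := (reach fmax1_program Sp).

Lemma div_mod_mul_add i k : (k < d)%nat -> ((i * d + k) / d = i /\ (i * d + k) mod d = k)%nat.
Proof.
  intros Hk; split.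
  - rewrite Nat.div_add_l, Nat.div_small by lia; lia.
  - rewrite Nat.add_comm, Nat.Div0.mod_add, Nat.mod_small by lia; reflexivity.
Qed.

Lemma init_point i k : (i < n)%nat -> (k < d)%nat -> inp (i * d + k)%nat = U i k.
Proof.
  intros Hi Hk; unfold inp, init_state; cbn [rmem].
  destruct (Nat.ltb_spec (i * d + k) (n * d)); [|nia].
  destruct (div_mod_mul_add i k Hk) as [-> ->]; reflexivity.
Qed.

Lemma init_center j k : (j < m)%nat -> (k < d)%nat -> inp (n * d + j * d + k)%nat = C j k.
Proof.
  intros Hj Hk; unfold inp, init_state; cbn [rmem].
  destruct (Nat.ltb_spec (n * d + j * d + k) (n * d)); [lia|].
  destruct (Nat.ltb_spec (n * d + j * d + k) (n * d + m * d)); [|nia].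
  replace (n * d + j * d + k - n * d)%nat with (j * d + k)%nat by lia.
  destruct (div_mod_mul_add j k Hk) as [-> ->]; reflexivity.
Qed.

Lemma init_radius j : (j < m)%nat -> inp (n * d + m * d + j)%nat = r j.
Proof.
  intros Hj; unfold inp, init_state; cbn [rmem].
  destruct (Nat.ltb_spec (n * d + m * d + j) (n * d)); [lia|].
  destruct (Nat.ltb_spec (n * d + m * d + j) (n * d + m * d)); [lia|].
  destruct (Nat.ltb_spec (n * d + m * d + j) (n * d + m * d + m)); [|lia].
  f_equal; lia.
Qed.

Definition copy_inv a (s : state) : Prop :=
  pc s = 8%nat /\ imem s 0%nat = Z.of_nat n /\ imem s 1%nat = Z.of_nat m /\
  imem s 2%nat = Z.of_nat d /\ imem s 3%nat = 1%Z /\ imem s 4%nat = Z.of_nat L /\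
  imem s 5%nat = Z.of_nat D0 /\ imem s 6%nat = Z.of_nat a /\
  (forall b, (b < a)%nat -> rmem s (D0 + b)%nat = inp b) /\
  (forall b, (a <= b < L)%nat -> rmem s b = inp b) /\ (a <= L)%nat.

Lemma copy_start : run (init_state d n m U C r) 8 (copy_inv 0).
Proof.
  unfold init_state; fold inp.
  set (I := fun a : nat => match a with
    | 0%nat => Z.of_nat n | 1%nat => Z.of_nat m | 2%nat => Z.of_nat d | _ => 0%Z end).
  assert (I0 : I 0%nat = Z.of_nat n) by reflexivity.
  assert (I1 : I 1%nat = Z.of_nat m) by reflexivity.
  assert (I2 : I 2%nat = Z.of_nat d) by reflexivity.
  clearbody I.
  do 8 run1.
  apply reach_done; repeat split; cbn [pc imem rmem]; simp_updI; try assumption; try lia.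
Qed.

Lemma copy_step a s : (a < L)%nat -> copy_inv a s -> run s 6 (copy_inv (S a)).
Proof.
  intros Ha (Hpc & I0 & I1 & I2 & I3 & I4 & I5 & I6 & Hcopied & Hrest & HaL).
  destruct s as [q I Rm]; cbn [pc imem rmem] in *; subst q.
  assert (Hv : Rm a = inp a) by (apply Hrest; lia).
  run_taken; [lia|]; run1; [lia|]; run1; run1; [lia|]; run1; run1.
  apply reach_done; repeat split; cbn [pc imem rmem]; simp_updI; try assumption; try lia.
  - intros b Hb; destruct (Nat.eq_dec b a) as [->|Hne]; simp_updR; [reflexivity|].
    apply Hcopied; lia.
  - intros b Hb; simp_updR; apply Hrest; lia.
Qed.

Lemma copy_loop s : copy_inv 0 s -> run s (L * 6) (copy_inv L).
Proof. apply (reach_loop _ _ copy_inv); intros a s' Ha; apply copy_step, Ha. Qed.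

Lemma copy_end s : copy_inv L s -> run s 6 (column_inv d n m U C r inp L D0 G0 0).
Proof.
  intros (Hpc & I0 & I1 & I2 & I3 & I4 & I5 & I6 & Hcopied & _ & _).
  destruct s as [q I Rm]; cbn [pc imem rmem] in *; subst q.
  run_not_taken; [lia|]; do 5 run1.
  apply reach_done; repeat split; cbn [pc imem rmem]; simp_updI; simp_updR;
    try assumption; try lia; try (f_equal; lia).
  intros b Hb; simp_updR; apply Hcopied, Hb.
Qed.

End Input_copy.

Lemma fmax1_program_correct d n m U C r :
  (1 <= d)%nat -> (1 <= n)%nat -> (1 <= m)%nat ->
  reach fmax1_program (100 * d * (m + n)) (init_state d n m U C r) (100 * d * m * n)
    (fun s => halted fmax1_program s /\
       rmem s 0%nat = fc_table (fun a b => dist d (U a) (C b) + r b) (m - 1) (n - 1)).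
Proof.
  intros Hd Hn Hm.
  set (L := (n * d + m * d + m)%nat); set (D0 := (L + 8)%nat); set (G0 := (D0 + L)%nat).
  set (Sp := (100 * d * (m + n))%nat).
  assert (HSp : (G0 + n + 20 <= Sp)%nat) by (unfold Sp, G0, D0, L; nia).
  set (inp := rmem (init_state d n m U C r)).
  apply reach_weaken
    with (8 + (L * 6 + (6 + (m * (11 + (n * (5 + d * 10 + 16) + 4)) + 5))))%nat.
  { assert (1 <= d * m * n)%nat by nia; unfold L; nia. }
  apply reach_trans with (copy_inv d n m U C r L D0 0);
    [apply (copy_start d n m U C r L D0 G0 Sp); easy|]; intros s1 H1.
  apply reach_trans with (copy_inv d n m U C r L D0 L);
    [apply (copy_loop d n m U C r L D0 G0 Sp); easy|]; intros s2 H2.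
  apply reach_trans with (column_inv d n m U C r inp L D0 G0 0);
    [apply (copy_end d n m U C r L D0 G0 Sp); easy|]; intros s3 H3.
  apply reach_trans with (column_inv d n m U C r inp L D0 G0 m).
  - apply (column_loop d n m U C r inp L D0 G0 Sp); try easy.
    + intros; apply (init_point d n m U C r L D0 G0 Sp); easy.
    + intros; apply (init_center d n m U C r L D0 G0 Sp); easy.
    + intros; apply (init_radius d n m U C r L D0 G0 Sp); easy.
  - intros s4 H4; apply (table_output d n m U C r inp L D0 G0 Sp); easy.
Qed.

Theorem theorem4p4 :
  exists (P : list instr) (c : nat),
  forall (d n m : nat) (U C : nat -> nat -> R) (r : nat -> R),
    (1 <= d)%nat -> (1 <= n)%nat -> (1 <= m)%nat ->
    (forall j, (j < m)%nat -> 0 < r j) ->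
    exists (t : nat) (s : state),
      (t <= c * d * m * n)%nat /\
      exec P (c * d * (m + n)) t (init_state d n m U C r) s /\
      halted P s /\
      frechet_max1 d n m U C r (rmem s 0).
Proof.
  exists fmax1_program, 100%nat; intros d n m U C r Hd Hn Hm Hr.
  destruct (fmax1_program_correct d n m U C r Hd Hn Hm)
    as (t & s & Ht & Hexec & Hhalt & Hout).
  exists t, s; do 3 (split; [assumption|]).
  rewrite Hout; apply frechet_max1_fc_table; assumption.
Qed.
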